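(* There is no $(3,2)$-critical graph that contains exactly three odd cycles.
   Context: All graphs are finite and simple. An odd cycle is a cycle (subgraph) of odd length. For a graph $G$, ${\rm es}_{\chi}(G)$ is the minimum number of edges of $G$ whose removal results in a spanning subgraph $G_1$ with $\chi(G_1)=\chi(G)-1$. $G$ is edge-stability critical if ${\rm es}_{\chi}(G-e)<{\rm es}_{\chi}(G)$ for every edge $e$. $G$ is $(3,2)$-critical if it is edge-stability critical with $\chi(G)=3$ and ${\rm es}_{\chi}(G)=2$. *)

From mathcomp Require Import all_boot.
Set Implicit Arguments. Unset Strict Implicit. Unset Printing Implicit Defensive.

Definition simple_graph (V : finType) (E : {set {set V}}) : Prop :=
  forall e, e \in E -> #|e| = 2.

Definition proper_coloring (V : finType) (k : nat) (E : {set {set V}})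
  (c : {ffun V -> 'I_k}) : bool :=
  [forall e in E, forall x in e, forall y in e, (x != y) ==> (c x != c y)].

Definition colorable (V : finType) (k : nat) (E : {set {set V}}) : bool :=
  [exists c : {ffun V -> 'I_k}, proper_coloring E c].

(* chromatic number: least k (<= |V|, always attained) with a proper k-colouring *)
Definition chi (V : finType) (E : {set {set V}}) : nat :=
  \big[minn/#|V|]_(k < #|V|.+1 | colorable k E) (k : nat).

Definition es_chi (V : finType) (E : {set {set V}}) : nat :=
  \big[minn/#|E|.+1]_(F : {set {set V}} | (F \subset E) && (chi (E :\: F) == (chi E).-1)) #|F|.

Definition edge_stability_critical (V : finType) (E : {set {set V}}) : Prop :=
  forall e, e \in E -> es_chi (E :\ e) < es_chi E.

Definition crit32 (V : finType) (E : {set {set V}}) : Prop :=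
  [/\ edge_stability_critical E, chi E = 3 & es_chi E = 2].

Definition cycle_edges (V : finType) (s : seq V) : {set {set V}} :=
  [set [set x; next s x] | x in s].

Definition odd_cycle_in (V : finType) (E : {set {set V}}) (C : {set {set V}}) : Prop :=
  C \subset E /\
  exists s : seq V, [/\ uniq s, 3 <= size s, odd (size s) & C = cycle_edges s].

From mathcomp Require Import all_boot order zify.
Set Implicit Arguments. Unset Strict Implicit. Unset Printing Implicit Defensive.
Import Order.TTheory.

(* Let C1, C2, C3 be the odd cycles. Deleting an edge common to all three would
   leave a bipartite graph, giving es_chi <= 1; so no edge lies on all three.
   Every odd cycle has an odd number of edges but meets every cut evenly, so the
   mod-2 sum H of C1, C2, C3 has the same properties; hence H is not bipartite
   and contains an odd cycle, say C1. Each edge of C1 then lies on C1 alone, i.e.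
   C1 is edge-disjoint from C2 and C3. Finally, an edge g off two edge-disjoint
   odd cycles C, D cannot exist: G - g still has chromatic number 3, so by
   criticality one edge would destroy all its odd cycles, and that edge would lie
   on both C and D. Thus C2 and C3 both cover the complement of C1, so C2 = C3. *)

Lemma not_uniq_split (T : eqType) (s : seq T) :
  ~~ uniq s -> exists x s1 s2 s3, s = s1 ++ x :: s2 ++ x :: s3.
Proof.
elim: s => [|y s IH] //=; rewrite negb_and negbK; case: (boolP (y \in s)) => /= [ys _ | _].
  by case/splitPr: ys => s2 s3; exists y, [::], s2, s3.
by case/IH => x [s1 [s2 [s3 ->]]]; exists x, (y :: s1), s2, s3.
Qed.

Lemma cycle_cat_split (T : eqType) (r : rel T) x p q :
  cycle r (x :: p ++ x :: q) -> cycle r (x :: p) /\ cycle r (x :: q).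
Proof.
by rewrite /= rcons_cat cat_path /= !rcons_path => /and4P[-> -> -> ->].
Qed.

Lemma odd_sum (I : Type) (r : seq I) (P : pred I) (f : I -> nat) :
  odd (\sum_(i <- r | P i) f i) = \big[addb/false]_(i <- r | P i) odd (f i).
Proof. exact: (big_morph odd oddD (erefl : odd 0 = false)). Qed.

Lemma odd_count_addb (T : Type) (a1 a2 : pred T) (r : seq T) :
  odd (count (fun x => a1 x (+) a2 x) r) = odd (count a1 r) (+) odd (count a2 r).
Proof.
elim: r => [|x r IH] //=; rewrite !oddD IH.
by case: (a1 x); case: (a2 x); case: (odd (count a1 r)); case: (odd (count a2 r)).
Qed.

Lemma card_sep_sum (I : finType) (K : {set I}) (P : pred I) :
  #|[set x in K | P x]| = \sum_(x in K) P x.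
Proof.
rewrite -sum1_card big_mkcond [RHS]big_mkcond; apply: eq_bigr => x _.
by rewrite inE; case: (x \in K); case: (P x).
Qed.

Lemma odd_sum_const (I : finType) (A : {pred I}) (f : I -> nat) c :
  (forall i, i \in A -> odd (f i) = c) -> odd (\sum_(i in A) f i) = c && odd #|A|.
Proof.
move=> f_c; rewrite odd_sum (eq_bigr (fun=> odd c)) => [|i /f_c ->]; last by rewrite oddb.
by rewrite -odd_sum sum_nat_const oddM andbC oddb.
Qed.

Section Symdiff.
Variable T : finType.
Implicit Types (A K : {set T}) (F : {set {set T}}).

Definition symdiff F : {set T} := [set x | odd #|[set A in F | x \in A]|].

Lemma odd_card_symdiffI F K : odd #|symdiff F :&: K| = odd (\sum_(A in F) #|A :&: K|).
Proof.
have card_setI A : #|A :&: K| = \sum_(x in K) (x \in A).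
  by rewrite -card_sep_sum; apply: eq_card => x; rewrite !inE andbC.
rewrite card_setI (eq_bigr _ (fun A _ => card_setI A)) exchange_big /=.
by rewrite !odd_sum; apply: eq_bigr => x _; rewrite inE oddb card_sep_sum.
Qed.

Lemma symdiff_sub F (E : {set T}) : (forall A, A \in F -> A \subset E) -> symdiff F \subset E.
Proof.
move=> FE; apply/subsetP => x; rewrite inE => /odd_gt0/card_gt0P[A].
by rewrite inE => /andP[/FE/subsetP AE /AE].
Qed.

Lemma symdiff3_disjoint F A B : #|F| = 3 -> A \in F -> B \in F -> A != B ->
  A \subset symdiff F -> (forall x, [set C in F | x \in C] != F) -> [disjoint A & B].
Proof.
move=> F3 AF BF AB AH not_all; rewrite disjoint_subset; apply/subsetP => x xA.
rewrite inE; apply/negP => xB; set S := [set C in F | x \in C].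
have odd_S : odd #|S| by have := subsetP AH x xA; rewrite inE.
have S_ge2 : 2 <= #|S|.
  have AB_S : [set A; B] \subset S by apply/subsetP => C /set2P[] ->; rewrite inE ?AF ?BF.
  by have := subset_leq_card AB_S; rewrite cards2 AB.
have S_lt3 : #|S| < 3.
  rewrite -F3 proper_card // properEneq not_all.
  by apply/subsetP => C; rewrite inE => /andP[].
by case: #|S| odd_S S_ge2 S_lt3 => [|[|[|]]].
Qed.

End Symdiff.

Section Colouring.
Variable V : finType.
Implicit Types E F : {set {set V}}.

Lemma colorable_subset k E F : F \subset E -> colorable k E -> colorable k F.
Proof.
move=> FE /existsP[c /forall_inP c_ok]; apply/existsP; exists c.
by apply/forall_inP => e /(subsetP FE) /c_ok.
Qed.

Lemma colorable_widen j k E : j <= k -> colorable j E -> colorable k E.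
Proof.
move=> jk /existsP[c /forall_inP c_ok]; apply/existsP.
exists [ffun x => widen_ord jk (c x)]; apply/forall_inP => e /c_ok c_e.
apply/forall_inP => x /(forall_inP c_e) c_x.
apply/forall_inP => y /(forall_inP c_x) /implyP c_xy; apply/implyP => /c_xy.
by rewrite !ffunE; apply: contra => /eqP[/val_inj ->].
Qed.

Lemma colorable_card E : colorable #|V| E.
Proof.
apply/existsP; exists [ffun x => enum_rank x]; apply/forall_inP => e _.
apply/forall_inP => x _; apply/forall_inP => y _; apply/implyP.
by rewrite !ffunE; apply: contra => /eqP /enum_rank_inj ->.
Qed.

Lemma chi_min k E : colorable k E -> chi E <= k.
Proof.
rewrite /chi -minEnat => ck; have [kV | Vk] := leqP k #|V|.
  exact: (@bigmin_le_cond _ _ _ #|V| (Ordinal (kV : k < #|V|.+1))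
    (fun i : 'I_#|V|.+1 => colorable i E) (fun i => i : nat) ck).
apply: leq_trans (ltnW Vk); rewrite -leEnat; exact: bigmin_le_id.
Qed.

Lemma chi_colorable E : colorable (chi E) E.
Proof.
rewrite /chi -minEnat.
have [i ci ->] := @eq_bigmin _ _ _ _ ord_max (fun i => colorable i E) val
  (colorable_card E) (fun i _ => leq_ord i).
exact: ci.
Qed.

Lemma chi_eq k E : colorable k E -> ~~ colorable k.-1 E -> chi E = k.
Proof.
move=> ck nck; apply/eqP; rewrite eqn_leq chi_min //= leqNgt.
apply: contra nck => lt_chi_k; apply: colorable_widen (chi_colorable E).
by rewrite -ltnS (ltn_predK lt_chi_k).
Qed.

Lemma es_chi_le E F : F \subset E -> chi (E :\: F) = (chi E).-1 -> es_chi E <= #|F|.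
Proof.
move=> FE chiF; rewrite /es_chi -minEnat -leEnat.
by apply: bigmin_le_cond; rewrite FE chiF eqxx.
Qed.

Lemma es_chi_attained E : es_chi E <= #|E| ->
  exists F, [/\ F \subset E, chi (E :\: F) = (chi E).-1 & #|F| = es_chi E].
Proof.
rewrite /es_chi -minEnat.
set P := fun F => (F \subset E) && (chi (E :\: F) == (chi E).-1).
case: (pickP P) => [F0 PF0 | noF]; last by rewrite big_pred0 // ltnn.
have small F : P F -> (#|F| <= #|E|.+1)%O.
  by case/andP => FE _; rewrite leEnat leqW // subset_leq_card.
have [F /andP[FE /eqP chiF] ->] := eq_bigmin F0 P (fun F => #|F|) PF0 small.
by exists F.
Qed.
End Colouring.

Section Bipartite.
Variable V : finType.
Implicit Types (E F C : {set {set V}}) (b : V -> bool).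

Definition cut b : {set {set V}} :=
  [set e : {set V} | [exists x in e, exists y in e, b x != b y]].

Definition adj E : rel V := fun x y => [set x; y] \in E.

Lemma cut2 b x y : ([set x; y] \in cut b) = (b x != b y).
Proof.
rewrite inE; apply/exists_inP/idP => [[x' /set2P x'E /exists_inP[y' /set2P y'E]] | bxy].
  by case: x'E y'E => -> [] ->; rewrite ?eqxx // eq_sym.
by exists x; rewrite ?set21 //; apply/exists_inP; exists y; rewrite ?set22.
Qed.

Lemma simple_sub E F : simple_graph E -> F \subset E -> simple_graph F.
Proof. by move=> sE FE e /(subsetP FE) /sE. Qed.

Lemma edgeE (e : {set V}) x y : #|e| = 2 -> x \in e -> y \in e -> x != y -> e = [set x; y].
Proof.
move=> e2 xe ye xy; apply/esym/eqP; rewrite eqEcard cards2 xy e2 leqnn andbT.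
by apply/subsetP => z /set2P[] ->.
Qed.

Lemma colorable2P E : simple_graph E -> reflect (exists b, E \subset cut b) (colorable 2 E).
Proof.
move=> sE; apply: (iffP existsP) => [[c /forall_inP c_ok] | [b /subsetP Eb]].
  exists (fun x => c x == ord0); apply/subsetP => e eE.
  have /eqP/cards2P[x [y [xy e_xy]]] := sE e eE.
  move: (c_ok e eE); rewrite e_xy cut2 => /forall_inP/(_ x (set21 _ _)).
  move=> /forall_inP/(_ y (set22 _ _)); rewrite xy /=.
  by case: (c x) => [[|[|?]] ?]; case: (c y) => [[|[|?]] ?].
exists [ffun x => if b x then ord_max else ord0]; apply/forall_inP => e eE.
apply/forall_inP => x xe; apply/forall_inP => y ye; apply/implyP => xy.
move: (Eb e eE); rewrite (edgeE (sE e eE) xe ye xy) cut2 !ffunE.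
by case: (b x); case: (b y).
Qed.

Lemma adj_sym E : symmetric (adj E).
Proof. by move=> x y; rewrite /adj setUC. Qed.

Lemma adj_sub E F : F \subset E -> subrel (adj F) (adj E).
Proof. by move=> FE x y /(subsetP FE). Qed.

Lemma adj_cut E b x y : E \subset cut b -> adj E x y -> b y = ~~ b x.
Proof. by move=> /subsetP Eb /Eb; rewrite cut2; case: (b x); case: (b y). Qed.

Lemma path_cut_parity E b x p :
  E \subset cut b -> path (adj E) x p -> b (last x p) = b x (+) odd (size p).
Proof.
move=> Eb; elim: p x => [|y p IH] x /=; first by rewrite addbF.
case/andP => /(adj_cut Eb) bxy /IH ->; rewrite bxy; by case: (b x); case: odd.
Qed.

Lemma cut_flip_component E b u : simple_graph E -> E \subset cut b ->
  E \subset cut (fun x => b x (+) connect (adj E) u x).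
Proof.
move=> sE /subsetP Eb; apply/subsetP => e eE.
have /eqP/cards2P[x [y [_ e_xy]]] := sE e eE.
have axy : adj E x y by rewrite /adj -e_xy.
have same_comp : connect (adj E) u y = connect (adj E) u x.
  by apply/idP/idP => /connect_trans; apply; apply: connect1; rewrite // adj_sym.
move: (Eb e eE); rewrite e_xy !cut2 same_comp.
by case: (b x); case: (b y); case: connect.
Qed.

Lemma bipartite_or_odd_walk E : simple_graph E ->
  (exists b, E \subset cut b) \/ exists2 w, cycle (adj E) w & odd (size w).
Proof.
have [n] := ubnP #|E|; elim: n E => // n IH E cardE sE.
have [-> | [e eE]] := set_0Vmem E; first by left; exists predT; rewrite sub0set.
have /eqP/cards2P[u [v [uv e_uv]]] := sE e eE.
have E'E : E :\ e \subset E := subD1set E e.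
have E_cut b : E :\ e \subset cut b -> b u != b v -> E \subset cut b.
  by move=> E'b buv; rewrite -(setD1K eE) subUset E'b andbT sub1set e_uv cut2.
have cardE' : #|E :\ e| < n by rewrite (cardsD1 e) eE in cardE.
have [[b E'b] | [w w_cyc w_odd]] := IH (E :\ e) cardE' (simple_sub sE E'E); last first.
  right; exists w => //; case: w w_cyc {w_odd} => //= x p.
  exact: (sub_path (adj_sub E'E)).
have [buv | ?] := eqVneq (b u) (b v); last by left; exists b; apply: E_cut.
have [/connectP[p p_path p_last] | no_uv] := boolP (connect (adj (E :\ e)) u v).
  right; exists (u :: p); last first.
    have := path_cut_parity E'b p_path; rewrite -p_last buv /=.
    by case: (b v); case: odd.
  rewrite /= rcons_path (sub_path (adj_sub E'E)) //= -p_last.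
  by rewrite /adj setUC -e_uv.
left; exists (fun x => b x (+) connect (adj (E :\ e)) u x).
apply: E_cut; first exact: cut_flip_component (simple_sub sE E'E) E'b.
by rewrite connect0 (negbTE no_uv) buv; case: (b v).
Qed.

End Bipartite.

Section OddCycles.
Variable V : finType.
Implicit Types (E F C D : {set {set V}}) (b : V -> bool).

Lemma next_neq (s : seq V) x : uniq s -> 3 <= size s -> x \in s ->
  next s x != x /\ next s (next s x) != x.
Proof.
move=> us ss xs; have [i s' rot_s] := rot_to xs.
rewrite -!(next_rot i us) rot_s.
have : uniq (x :: s') by rewrite -rot_s rot_uniq.
have : 3 <= size (x :: s') by rewrite -rot_s size_rot.
case: s' {rot_s} => [|y [|z t]] //= _.
rewrite !inE !negb_or => /andP[/and3P[xy xz _] /andP[/andP[yz _] _]].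
by rewrite /next /= !eqxx [y == x]eq_sym (negbTE xy) /= eq_sym.
Qed.

Lemma cycle_edge_inj (s : seq V) : uniq s -> 3 <= size s ->
  {in s &, injective (fun x => [set x; next s x])}.
Proof.
move=> us ss x y xs ys /= exy; apply/eqP; apply: contraT => xy.
have [nx_x nnx_x] := next_neq us ss xs.
have /set2P[yx | y_nx] : y \in [set x; next s x] by rewrite exy set21.
  by rewrite yx eqxx in xy.
have /set2P[xy' | x_ny] : x \in [set y; next s y] by rewrite -exy set21.
  by rewrite xy' eqxx in xy.
by rewrite -y_nx -x_ny eqxx in nnx_x.
Qed.

Lemma card_cycle_edgesI (s : seq V) K : uniq s -> 3 <= size s ->
  #|cycle_edges s :&: K| = count (fun x => [set x; next s x] \in K) s.
Proof.
move=> us ss; set f := fun x => [set x; next s x].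
have -> : cycle_edges s :&: K = f @: [set x | (x \in s) && (f x \in K)].
  apply/setP => e; rewrite inE; apply/andP/imsetP => [[/imsetP[x xs ->] xK] | [x]].
    by exists x; rewrite // inE xs.
  by rewrite inE => /andP[xs xK] ->; split=> //; apply: imset_f.
rewrite card_in_imset => [|x y]; last first.
  by rewrite !inE => /andP[xs _] /andP[ys _]; apply: cycle_edge_inj.
rewrite -size_filter -(card_uniqP (filter_uniq _ us)).
by apply: eq_card => x; rewrite inE mem_filter andbC.
Qed.

Lemma card_cycle_edges (s : seq V) : uniq s -> 3 <= size s -> #|cycle_edges s| = size s.
Proof.
move=> us ss; rewrite -[cycle_edges s]setIT card_cycle_edgesI // -[RHS]count_predT.
by apply: eq_count => x; rewrite inE.
Qed.

Lemma cycle_edges_cut_even (s : seq V) b : uniq s -> 3 <= size s ->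
  ~~ odd #|cycle_edges s :&: cut b|.
Proof.
move=> us ss; rewrite card_cycle_edgesI //.
rewrite (eq_count (a2 := fun x => b x (+) b (next s x))); last first.
  by move=> x; rewrite cut2; case: (b x); case: (b (next s x)).
have next_perm : perm_eq (map (next s) s) s.
  apply: uniq_perm; rewrite ?(map_inj_uniq (can_inj (prev_next us))) //.
  by move=> y; rewrite -{1}(next_prev us y) (mem_map (can_inj (prev_next us))) mem_prev.
rewrite odd_count_addb -[count (fun x => b (next s x)) s]count_map (permP next_perm).
by case: odd.
Qed.

Lemma odd_cycle_sub E C : odd_cycle_in E C -> C \subset E.
Proof. by case. Qed.

Lemma odd_cycle_odd E C : odd_cycle_in E C -> odd #|C|.
Proof. by case=> _ [s [us ss os ->]]; rewrite card_cycle_edges. Qed.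

Lemma odd_cycle_card E C : odd_cycle_in E C -> 3 <= #|C|.
Proof. by case=> _ [s [us ss _ ->]]; rewrite card_cycle_edges. Qed.

Lemma odd_cycle_cut_even E C b : odd_cycle_in E C -> ~~ odd #|C :&: cut b|.
Proof. by case=> _ [s [us ss _ ->]]; apply: cycle_edges_cut_even. Qed.

Lemma odd_cycle_not_cut E C b : odd_cycle_in E C -> ~~ (C \subset cut b).
Proof.
move=> oC; apply: contraNN (odd_cycle_cut_even b oC) => /setIidPl ->.
exact: odd_cycle_odd oC.
Qed.

Lemma odd_cycle_in_subgraph E F C : C \subset F -> odd_cycle_in E C -> odd_cycle_in F C.
Proof. by move=> CF [_ cyc]. Qed.

Lemma odd_cycle_in_supergraph E F C : F \subset E -> odd_cycle_in F C -> odd_cycle_in E C.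
Proof. by move=> FE [CF cyc]; split=> //; apply: subset_trans FE. Qed.

Lemma odd_walk_odd_cycle E w : simple_graph E -> cycle (adj E) w -> odd (size w) ->
  exists C, odd_cycle_in E C.
Proof.
move=> sE; have [n] := ubnP (size w); elim: n w => // n IH w w_n w_cyc w_odd.
have [uw | /not_uniq_split[x [s1 [s2 [s3 w_split]]]]] := boolP (uniq w).
  exists (cycle_edges w); split; last first.
    exists w; split=> //; case: w w_cyc w_odd {w_n uw} => [|x [|y [|z t]]] //= cyc _.
    by move: cyc; rewrite andbT => /sE; rewrite setUid cards1.
  by apply/subsetP => _ /imsetP[x xw ->]; apply: (next_cycle w_cyc xw).
have : cycle (adj E) (x :: s2 ++ x :: s3 ++ s1).
  by move: w_cyc; rewrite -(rot_cycle (size s1)) w_split rot_size_cat /= -catA.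
case/cycle_cat_split => cyc2 cyc3.
have w_size : size w = size (x :: s2) + size (x :: s3 ++ s1).
  by rewrite w_split /= !size_cat /= size_cat /=; lia.
have [odd2 | even2] := boolP (odd (size (x :: s2))).
  by apply: IH cyc2 odd2; move: w_n; rewrite w_size /=; lia.
apply: IH cyc3 _; first by move: w_n; rewrite w_size /=; lia.
by move: w_odd; rewrite w_size oddD (negbTE even2).
Qed.

Lemma bipartite_or_odd_cycle E : simple_graph E ->
  (exists b, E \subset cut b) \/ exists C, odd_cycle_in E C.
Proof.
move=> sE; have [bip | [w w_cyc w_odd]] := bipartite_or_odd_walk sE; first by left.
by right; apply: odd_walk_odd_cycle sE w_cyc w_odd.
Qed.

Lemma colorable2_odd_cycle E : simple_graph E -> colorable 2 E <-> ~ exists C, odd_cycle_in E C.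
Proof.
move=> sE; split => [/(colorable2P sE)[b Eb] [C oC] | no_odd].
  by have := odd_cycle_not_cut b oC; rewrite (subset_trans (odd_cycle_sub oC) Eb).
apply/(colorable2P sE); have [//|oC] := bipartite_or_odd_cycle sE.
by case: no_odd.
Qed.

Lemma symdiff_odd_cycles E (F : {set {set {set V}}}) : simple_graph E -> odd #|F| ->
  (forall C, C \in F -> odd_cycle_in E C) -> exists C, odd_cycle_in E C /\ C \subset symdiff F.
Proof.
move=> sE oddF oF.
have HE : symdiff F \subset E by apply: symdiff_sub => C /oF/odd_cycle_sub.
have [[b Hb] | [C oC]] := bipartite_or_odd_cycle (simple_sub sE HE); last first.
  by exists C; split; [apply: odd_cycle_in_supergraph HE oC | apply: odd_cycle_sub oC].
have odd_H : odd #|symdiff F|.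
  rewrite -[symdiff F]setIT odd_card_symdiffI (odd_sum_const (c := true)) ?oddF // => C /oF oC.
  by rewrite setIT (odd_cycle_odd oC).
have : ~~ odd #|symdiff F :&: cut b|.
  rewrite odd_card_symdiffI (odd_sum_const (c := false)) // => C /oF oC.
  exact/negbTE/(odd_cycle_cut_even b oC).
by rewrite (setIidPl Hb) odd_H.
Qed.

End OddCycles.

Section Critical.
Variable V : finType.
Implicit Types (E F C D : {set {set V}}).

Lemma chi3_odd_cycle E : simple_graph E -> chi E = 3 -> exists C, odd_cycle_in E C.
Proof.
move=> sE chi3; have [bip | //] := bipartite_or_odd_cycle sE.
by have := chi_min (introT (colorable2P sE) bip); rewrite chi3.
Qed.

Lemma chi_bipartite E : simple_graph E -> colorable 2 E -> E != set0 -> chi E = 2.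
Proof.
move=> sE col2 /set0Pn[e eE]; apply: chi_eq => //=.
have /eqP/cards2P[x [y [xy e_xy]]] := sE e eE.
apply/existsP => -[c /forall_inP/(_ e eE)]; rewrite e_xy.
move=> /forall_inP/(_ x (set21 _ _))/forall_inP/(_ y (set22 _ _)).
by rewrite xy (ord1 (c x)) (ord1 (c y)).
Qed.

Lemma es_chi_le1_of_common_edge E e : simple_graph E -> chi E = 3 ->
  (forall C, odd_cycle_in E C -> e \in C) -> es_chi E <= 1.
Proof.
move=> sE chi3 all_e; have [C0 oC0] := chi3_odd_cycle sE chi3.
have C0E := subsetP (odd_cycle_sub oC0).
have E'E : E :\ e \subset E := subD1set E e.
have sE' := simple_sub sE E'E.
have col2 : colorable 2 (E :\ e).
  apply/(colorable2_odd_cycle sE') => -[C oC].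
  have := all_e C (odd_cycle_in_supergraph E'E oC).
  by move/(subsetP (odd_cycle_sub oC)); rewrite !inE eqxx.
have nonempty : E :\ e != set0.
  have /card_gt0P[f /setD1P[fe fC0]] : 0 < #|C0 :\ e|.
    by move: (odd_cycle_card oC0); rewrite (cardsD1 e) (all_e _ oC0) add1n ltnS; apply: leq_trans.
  by apply/set0Pn; exists f; rewrite !inE fe C0E.
rewrite -(cards1 e); apply: es_chi_le; first by rewrite sub1set C0E ?all_e.
by rewrite chi3 chi_bipartite.
Qed.

Lemma odd_cycles_meet E C D : simple_graph E -> chi E = 3 -> es_chi E <= 1 ->
  odd_cycle_in E C -> odd_cycle_in E D -> ~~ [disjoint C & D].
Proof.
move=> sE chi3 es1 oC oD.
have es_E : es_chi E <= #|E|.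
  apply: leq_trans es1 (leq_trans _ (subset_leq_card (odd_cycle_sub oC))).
  exact: leq_trans _ (odd_cycle_card oC).
have [F [FE chiF cardF]] := es_chi_attained es_E.
have sEF : simple_graph (E :\: F) := simple_sub sE (subsetDl E F).
have col2 : colorable 2 (E :\: F) by rewrite -[2]/(3.-1) -chi3 -chiF chi_colorable.
have hits A : odd_cycle_in E A -> exists2 f, f \in A & f \in F.
  move=> oA; have [AEF | /subsetPn[f fA fNEF]] := boolP (A \subset E :\: F).
    case: ((colorable2_odd_cycle sEF).1 col2); exists A.
    exact: odd_cycle_in_subgraph AEF oA.
  by exists f; move: fNEF; rewrite inE (subsetP (odd_cycle_sub oA) f fA) andbT negbK.
have [x xC xF] := hits C oC; have [y yD yF] := hits D oD.
have /card_le1P/(_ x xF)/(_ y) : #|F| <= 1 by rewrite cardF.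
rewrite yF => /esym/eqP yx.
by apply/negP => CD; rewrite yx (disjointFr CD xC) in yD.
Qed.

Lemma crit32_subsetU_disjoint_odd_cycles E C D : simple_graph E -> crit32 E ->
  odd_cycle_in E C -> odd_cycle_in E D -> [disjoint C & D] -> E \subset C :|: D.
Proof.
move=> sE [crit chi3 es2] oC oD; apply: contraTT => /subsetPn[g gE].
rewrite inE negb_or => /andP[gC gD].
have E'E : E :\ g \subset E := subD1set E g.
have sE' := simple_sub sE E'E.
have avoid_g A : odd_cycle_in E A -> g \notin A -> odd_cycle_in (E :\ g) A.
  move=> oA gA; apply: (odd_cycle_in_subgraph _ oA).
  apply/subsetP => f fA; rewrite !inE (subsetP (odd_cycle_sub oA) f fA) andbT.
  by apply: contraNneq gA => <-.
have oC' := avoid_g C oC gC; have oD' := avoid_g D oD gD.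
apply: (odd_cycles_meet sE' _ _ oC' oD'); last by rewrite -ltnS -es2 crit.
apply: chi_eq; first by apply: colorable_subset E'E _; rewrite -chi3 chi_colorable.
by apply/negP => /(colorable2_odd_cycle sE'); apply; exists C.
Qed.

Lemma crit32_disjoint_odd_cycles_eq E C D D' : simple_graph E -> crit32 E ->
  odd_cycle_in E C -> odd_cycle_in E D -> odd_cycle_in E D' ->
  [disjoint C & D] -> [disjoint C & D'] -> D = D'.
Proof.
move=> sE cr oC.
suff sub A B : odd_cycle_in E A -> odd_cycle_in E B ->
    [disjoint C & A] -> [disjoint C & B] -> A \subset B.
  by move=> oD oD' CD CD'; apply/eqP; rewrite eqEsubset !sub.
move=> oA oB CA CB; apply/subsetP => f fA.
have /subsetP := crit32_subsetU_disjoint_odd_cycles sE cr oC oB CB.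
by move/(_ f (subsetP (odd_cycle_sub oA) f fA)); rewrite inE (disjointFl CA fA).
Qed.

Lemma crit32_odd_cycles_card E (F : {set {set {set V}}}) :
  simple_graph E -> crit32 E -> (forall C, odd_cycle_in E C <-> C \in F) -> #|F| != 3.
Proof.
move=> sE cr oddF; apply/eqP => F3; have [_ chi3 es2] := cr.
have oF C : C \in F -> odd_cycle_in E C by move/oddF.
have odd_F : odd #|F| by rewrite F3.
have [C [oC CH]] := symdiff_odd_cycles sE odd_F oF.
have not_all x : [set A in F | x \in A] != F.
  apply/eqP => all_x; suff: es_chi E <= 1 by rewrite es2.
  by apply: (es_chi_le1_of_common_edge (e := x) sE chi3) => A /oddF; rewrite -all_x inE => /andP[].
have CF : C \in F by apply/oddF.
have /cards2P[D [D' [DD' FC]]] : #|F :\ C| == 2.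
  by move: F3; rewrite (cardsD1 C) CF add1n => -[->].
have disj A : A \in F :\ C -> [disjoint C & A].
  by case/setD1P => AC AF; apply: symdiff3_disjoint F3 CF AF _ CH not_all; rewrite eq_sym.
have [DF D'F] : D \in F :\ C /\ D' \in F :\ C by rewrite FC set21 set22.
have oFC A : A \in F :\ C -> odd_cycle_in E A by move/(subsetP (subD1set F C))/oF.
have := crit32_disjoint_odd_cycles_eq sE cr oC (oFC _ DF) (oFC _ D'F) (disj _ DF) (disj _ D'F).
by move/eqP; rewrite (negbTE DD').
Qed.

End Critical.

Theorem theorem2p4 (V : finType) (E : {set {set V}}) :
  simple_graph E -> crit32 E ->
  ~ (exists C1 C2 C3 : {set {set V}},
        [/\ odd_cycle_in E C1, odd_cycle_in E C2, odd_cycle_in E C3,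
            [/\ C1 != C2, C1 != C3 & C2 != C3] &
            forall C, odd_cycle_in E C -> C = C1 \/ C = C2 \/ C = C3]).
Proof.
move=> sE cr [C1 [C2 [C3 [o1 o2 o3 [n12 n13 n23] only]]]].
suff: #|[set C1; C2; C3]| != 3.
  by rewrite setUC cardsU1 cards2 !inE n12 ![C3 == _]eq_sym (negbTE n13) (negbTE n23).
apply: crit32_odd_cycles_card sE cr _ => C; rewrite !inE.
by split => [/only[|[|]] -> | /orP[/orP[] | ] /eqP ->]; rewrite ?eqxx ?orbT.
Qed.
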